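(* Let $\delta\ge1$, $d_Y\le d_X$, and let $\Sigma=X\sqcup Y$ be a $\delta$-approximately $(d_X,d_Y)$-biregular bipartite graph. Let $a,g\in\mathbb N$, $1\le\psi_X\le d_X-1$ and $1\le\psi_Y\le d_Y/\delta-1$. If $(F,S)$ is a $(\psi_X,\psi_Y)$-approximating pair for some $A\in\mathcal G(a,g)$, then, with $s=|S|$ and $f=|F|$, \[ s\le f+\frac{1}{d_X}\big[(g-f)\psi_Y+(s-a)\psi_X\big].\]
   Context: A bipartite graph $\Sigma$ with parts $X,Y$ is $\delta$-approximately $(d_X,d_Y)$-biregular if every $v\in X$ has degree $d(v)\in[d_X,\delta d_X]$ and every $v\in Y$ has degree $d(v)\in[\delta^{-1}d_Y,d_Y]$. $N(S)$ is the set of neighbours of $S$; $d_B(x)=|N(x)\cap B|$. For $A\subseteq X$, $[A]=\{x\in X:N(x)\subseteq N(A)\}$. A set is 2-linked if it induces a connected subgraph of $\Sigma^2$ (vertices adjacent iff at distance at most 2 in $\Sigma$). $\mathcal G(a,g)=\{A\subseteq X\text{ 2-linked}:|[A]|=a,|N(A)|=g\}$. A $(\psi_X,\psi_Y)$-approximating pair for $A\subseteq X$ is a pair $(F,S)\in 2^Y\times 2^X$ with $F\subseteq N(A)$, $S\supseteq[A]$, $d_F(u)\ge d(u)-\psi_X$ for all $u\in S$, and $d_{X\setminus S}(v)\ge d(v)-\psi_Y$ for all $v\in Y\setminus F$. *)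

From mathcomp Require Import all_boot all_order all_algebra.
Set Implicit Arguments. Unset Strict Implicit. Unset Printing Implicit Defensive.
Import Order.TTheory GRing.Theory Num.Theory.

Section Bip.
Variables (X Y : finType) (adj : X -> Y -> bool).

Definition NX (x : X) : {set Y} := [set y | adj x y].
Definition NY (y : Y) : {set X} := [set x | adj x y].
Definition NS (S : {set X}) : {set Y} := [set y | [exists x in S, adj x y]].
Definition degX (x : X) : nat := #|NX x|.
Definition degY (y : Y) : nat := #|NY y|.
Definition degXin (B : {set Y}) (x : X) : nat := #|NX x :&: B|.
Definition degYin (B : {set X}) (y : Y) : nat := #|NY y :&: B|.

Definition closure (A : {set X}) : {set X} := [set x | NX x \subset NS A].

(* adjacency in Sigma^2 restricted to A ⊆ X: distance <= 2, i.e. a common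
   neighbour (two vertices of X are never adjacent in Sigma) *)
Definition sq_rel (A : {set X}) : rel X :=
  fun x x' => [&& x \in A, x' \in A & [exists y, adj x y && adj x' y]].
Definition two_linked (A : {set X}) : Prop :=
  forall x x', x \in A -> x' \in A -> connect (sq_rel A) x x'.

Definition calG (a g : nat) (A : {set X}) : Prop :=
  two_linked A /\ #|closure A| = a /\ #|NS A| = g.

Variable R : realFieldType.

Definition approx_biregular (delta dX dY : R) : Prop :=
  (forall x : X, dX <= (degX x)%:R <= delta * dX)%R /\
  (forall y : Y, delta^-1 * dY <= (degY y)%:R <= dY)%R.

Definition approx_pair (psiX psiY : R) (A : {set X}) (F : {set Y}) (S : {set X})
  : Prop :=
  [/\ F \subset NS A, closure A \subset S,
      (forall u, u \in S -> (degX u)%:R - psiX <= (degXin F u)%:R)%R &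
      (forall v, v \in ~: F -> (degY v)%:R - psiY <= (degYin (~: S) v)%:R)%R].

End Bip.

(** Double count the edges between [S] and [N(A)].  A vertex of [[A]] sends
    all of its at least [d_X] edges into [N(A)], and any other vertex of [S]
    sends at least [d_X - psi_X] of them into [F], hence into [N(A)].
    Conversely a vertex of [F] receives at most [d_Y <= d_X] edges, and a
    vertex of [N(A) \ F] at most [psi_Y] edges from [S].  Comparing the two
    counts and dividing by [d_X] gives the bound.  Only the degree bounds
    [d_X <= d(x)], [d(y) <= d_Y <= d_X] and [psi_X <= d_X - 1] (which makes
    [d_X] positive) are needed. *)
From Pilot Require Import Defs.
From mathcomp Require Import all_boot all_order all_algebra.
From mathcomp Require Import lra.
Set Implicit Arguments. Unset Strict Implicit. Unset Printing Implicit Defensive.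
Import Order.TTheory GRing.Theory Num.Theory.
Local Open Scope ring_scope.

Section SumSplit.
Variables (R : numDomainType) (T : finType).

Lemma ler_sum_split (C S : {set T}) (h : T -> R) (c1 c2 : R) :
    C \subset S ->
    (forall u, u \in C -> c1 <= h u) ->
    (forall u, u \in S :\: C -> c2 <= h u) ->
  #|C|%:R * c1 + (#|S|%:R - #|C|%:R) * c2 <= \sum_(u in S) h u.
Proof.
move=> sCS hC hSC; rewrite (big_setID C) (setIidPr sCS) /=.
have -> : (#|S|%:R - #|C|%:R : R) = #|S :\: C|%:R.
  by rewrite -(cardsID C S) (setIidPr sCS) natrD addrAC subrr add0r.
rewrite !mulr_natl -!sumr_const.
by apply: lerD; apply: ler_sum.
Qed.

Lemma ger_sum_split (C S : {set T}) (h : T -> R) (c1 c2 : R) :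
    C \subset S ->
    (forall u, u \in C -> h u <= c1) ->
    (forall u, u \in S :\: C -> h u <= c2) ->
  \sum_(u in S) h u <= #|C|%:R * c1 + (#|S|%:R - #|C|%:R) * c2.
Proof.
move=> sCS hC hSC; rewrite -lerN2 -sumrN opprD -!mulrN.
by apply: ler_sum_split => // u => [/hC | /hSC]; rewrite lerN2.
Qed.

End SumSplit.

Section Bipartite.
Variables (X Y : finType) (adj : X -> Y -> bool).

Lemma degXin_sum1 (B : {set Y}) (u : X) :
  degXin adj B u = (\sum_(v in B | adj u v) 1)%N.
Proof. by rewrite /degXin -sum1_card; apply: eq_bigl => v; rewrite !inE andbC. Qed.

Lemma degYin_sum1 (S : {set X}) (v : Y) :
  degYin adj S v = (\sum_(u in S | adj u v) 1)%N.
Proof. by rewrite /degYin -sum1_card; apply: eq_bigl => u; rewrite !inE andbC. Qed.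

Lemma sum_degXin_degYin (S : {set X}) (B : {set Y}) :
  (\sum_(u in S) degXin adj B u = \sum_(v in B) degYin adj S v)%N.
Proof.
under eq_bigr do rewrite degXin_sum1.
rewrite (exchange_big_dep (mem B)) => [|u v _ /andP[] //].
apply: eq_bigr => v /[!inE] vB.
by rewrite degYin_sum1; apply: eq_bigl => u; rewrite vB.
Qed.

Lemma degXin_closure (A : {set X}) (u : X) :
  u \in Defs.closure adj A -> degXin adj (NS adj A) u = degX adj u.
Proof. by rewrite inE => /setIidPl; rewrite /degXin => ->. Qed.

Lemma degYin_setC (S : {set X}) (v : Y) :
  (degYin adj S v + degYin adj (~: S) v)%N = degY adj v.
Proof. by rewrite /degYin -setDE cardsID. Qed.

Section EdgeBounds.
Variables (R : realFieldType) (dX psiX psiY : R).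
Variables (A S : {set X}) (F : {set Y}).
Hypothesis pairFS : approx_pair adj psiX psiY A F S.

Lemma approx_pair_edges_lower :
    (forall x, dX <= (degX adj x)%:R) ->
  #|Defs.closure adj A|%:R * dX
    + (#|S|%:R - #|Defs.closure adj A|%:R) * (dX - psiX)
    <= \sum_(u in S) (degXin adj (NS adj A) u)%:R.
Proof.
case: pairFS => sFN sAS degS _ mindeg.
apply: ler_sum_split => // u; first by move/degXin_closure->.
case/setDP=> /degS degFu _.
apply: le_trans (le_trans _ degFu) _; first by rewrite lerD2r mindeg.
by rewrite ler_nat; apply/subset_leq_card/setIS.
Qed.

Lemma approx_pair_edges_upper :
    (forall y, (degY adj y)%:R <= dX) ->
  \sum_(v in NS adj A) (degYin adj S v)%:R
    <= #|F|%:R * dX + (#|NS adj A|%:R - #|F|%:R) * psiY.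
Proof.
case: pairFS => sFN _ _ degCF maxdeg.
apply: ger_sum_split => // v.
  move=> _; apply: le_trans (maxdeg v); rewrite ler_nat.
  exact/subset_leq_card/subsetIl.
case/setDP=> _ vF; have := degCF v; rewrite inE vF -(degYin_setC S v) natrD.
by move/(_ isT); rewrite lerBlDl lerD2r.
Qed.

End EdgeBounds.
End Bipartite.

Theorem proposition2p3 (R : realFieldType) (X Y : finType) (adj : X -> Y -> bool)
  (delta dX dY psiX psiY : R) (a g : nat) (A : {set X}) (F : {set Y}) (S : {set X}) :
  1 <= delta -> dY <= dX ->
  approx_biregular adj delta dX dY ->
  1 <= psiX -> psiX <= dX - 1 ->
  1 <= psiY -> psiY <= dY / delta - 1 ->
  calG adj a g A ->
  approx_pair adj psiX psiY A F S ->
  (#|S|%:R : R) <= #|F|%:R +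
     dX^-1 * ((g%:R - #|F|%:R) * psiY + (#|S|%:R - a%:R) * psiX).
Proof.
move=> _ dYX [degX_bd degY_bd] psiX_ge1 psiX_le _ _ [_ [<- <-]] pairFS.
have dX_gt0 : 0 < dX by lra.
have lower := approx_pair_edges_lower pairFS (fun x => (andP (degX_bd x)).1).
have upper := approx_pair_edges_upper pairFS
  (fun y => le_trans (andP (degY_bd y)).2 dYX).
rewrite -natr_sum sum_degXin_degYin natr_sum in lower.
rewrite -lerBlDl ler_pdivlMl //.
lra.
Qed.
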